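(* For $n\ge 3$, $M_2(CP_{n-1})\simeq M_2(CC_n)\simeq S^{2n-1}$, where $CP_{n-1}$ is the clawed path of length $n-1$ and $CC_n$ is the clawed $n$-cycle.
   Context: A path of length $k$ has $k$ edges. For a graph $G$ of maximum degree at most $3$, the clawed graph $CG$ is obtained by subdividing every edge of $G$ and then attaching new leaves to every original vertex so that every original vertex has degree exactly $3$; $CP_{k}$ is the clawed graph of the path of length $k$ and $CC_n$ is the clawed graph of the cycle on $n$ vertices. $M_2(G)$ is the simplicial complex whose vertices are the edges of $G$ and whose faces are the $2$-matchings of $G$ (edge sets in which every vertex has degree at most $2$). *)

From HB Require Import structures.
From mathcomp Require Import all_boot all_order all_algebra.
From mathcomp Require Import reals.
Set Implicit Arguments. Unset Strict Implicit. Unset Printing Implicit Defensive.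
Import Order.TTheory GRing.Theory Num.Theory.

(* A simple graph is a symmetric irreflexive relation [adj] on a finType V.
   Edges are the 2-element vertex sets {u,v} with adj u v. *)
Definition edges (V : finType) (adj : rel V) : {set {set V}} :=
  [set e : {set V} | [exists u, exists v, adj u v && (e == [set u; v])]].

Definition deg (V : finType) (adj : rel V) (v : V) : nat := #|[set u | adj v u]|.

(* Vertices of the clawed graph CG: original vertices (inl v), one
   subdivision vertex per 2-subset e of V (only those with e an edge of G
   are used; the others are isolated), and potential leaves (v, i), i < 3;
   the leaf (v,i) is attached to v iff i < 3 - deg v, so that every original
   vertex ends up with degree exactly 3 (when G has max degree <= 3). *)
Definition claw_vertex (V : finType) : finType := (V + ({set V} + (V * 'I_3)))%type.

Definition claw_half (V : finType) (adj : rel V) (x y : claw_vertex V) : bool :=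
  match x, y with
  | inl v, inr (inl e) => (e \in edges adj) && (v \in e)
  | inl v, inr (inr (w, i)) => (v == w) && (i < 3 - deg adj v)
  | _, _ => false
  end.

Definition claw_adj (V : finType) (adj : rel V) : rel (claw_vertex V) :=
  fun x y => claw_half adj x y || claw_half adj y x.

Definition path_adj (k : nat) : rel 'I_k.+1 :=
  fun i j => (i.+1 == j :> nat) || (j.+1 == i :> nat).

Definition cycle_adj (n : nat) : rel 'I_n :=
  fun i j => (i != j) && ((i.+1 %% n == j :> nat) || (j.+1 %% n == i :> nat)).

(* Faces of M_2(G): sets F of edges of G with every vertex in at most 2
   edges of F.  The complex has ground type {set V}; its vertices are exactly
   the edges of G (singletons of edges are faces). *)
Definition M2 (V : finType) (adj : rel V) : {set {set {set V}}} :=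
  [set F : {set {set V}} | (F \subset edges adj) &&
     [forall v : V, #|[set e in F | v \in e]| <= 2]].

Local Open Scope ring_scope.

Section Topo.
Variable R : realType.

Definition dist (T : finType) (x y : T -> R) : R := \big[Num.max/0]_(i : T) `|x i - y i|.

Definition realization (T : finType) (K : {set {set T}}) (x : T -> R) : Prop :=
  (forall i, 0 <= x i) /\ \sum_(i : T) x i = 1 /\ [set i | x i != 0] \in K.

Definition sphere (m : nat) (y : 'I_m.+1 -> R) : Prop :=
  \sum_(i : 'I_m.+1) y i ^+ 2 = 1.

Definition cont_on (T U : finType) (A : (T -> R) -> Prop) (f : (T -> R) -> (U -> R)) : Prop :=
  forall x, A x -> forall e : R, 0 < e -> exists2 d : R, 0 < d &
    forall y, A y -> dist x y < d -> dist (f x) (f y) < e.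

Definition maps_into (T U : finType) (A : (T -> R) -> Prop) (B : (U -> R) -> Prop)
  (f : (T -> R) -> (U -> R)) : Prop := forall x, A x -> B (f x).

Definition homotopy_on (T : finType) (A : (T -> R) -> Prop)
  (H : R -> (T -> R) -> (T -> R)) (f0 f1 : (T -> R) -> (T -> R)) : Prop :=
  [/\ forall t x, 0 <= t <= 1 -> A x -> A (H t x),
      forall t x, 0 <= t <= 1 -> A x -> forall e : R, 0 < e -> exists2 d : R, 0 < d &
        forall s y, 0 <= s <= 1 -> A y -> `|s - t| < d -> dist x y < d ->
          dist (H s y) (H t x) < e,
      forall x, A x -> H 0 x = f0 x &
      forall x, A x -> H 1 x = f1 x].

Definition homotopy_equivalent (T U : finType) (A : (T -> R) -> Prop) (B : (U -> R) -> Prop) : Prop :=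
  exists (f : (T -> R) -> (U -> R)) (g : (U -> R) -> (T -> R)),
    [/\ maps_into A B f, maps_into B A g, cont_on A f & cont_on B g] /\
    (exists H, homotopy_on A H (fun x => g (f x)) id) /\
    (exists K, homotopy_on B K (fun y => f (g y)) id).

End Topo.

Arguments realization R {T} K x.
Arguments homotopy_equivalent R {T U} A B.
Arguments path_adj : clear implicits.
Arguments cycle_adj : clear implicits.
Arguments sphere : clear implicits.

From HB Require Import structures.
From mathcomp Require Import all_boot all_order all_algebra.
From mathcomp Require Import reals.
From mathcomp Require Import ring lra zify.
From Stdlib Require Import FunctionalExtensionality.
Set Implicit Arguments. Unset Strict Implicit. Unset Printing Implicit Defensive.
Import Order.TTheory GRing.Theory Num.Theory.

(* In the clawed graph CG every edge joins an original vertex v to one of its exactly three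
   neighbours, and all other vertices of CG have degree at most 2.  So the only constraint on
   a 2-matching is that it misses one of the three edges at each original vertex: M_2(CG) is
   the join, over the original vertices, of the boundaries of triangles, i.e. of circles,
   hence a sphere of dimension 2|V(G)| - 1.  Explicitly, the differences x(v,0) - x(v,2) and
   x(v,1) - x(v,2) of barycentric coordinates, normalised, map the realization onto the unit
   sphere with a piecewise linear inverse; for such a homeomorphism the constant homotopies
   witness the homotopy equivalence. *)

Local Open Scope ring_scope.

Section RealContinuity.
Variables (R : realType) (T : finType) (A : (T -> R) -> Prop).
Implicit Types (x y : T -> R) (f g : (T -> R) -> R).

Lemma le_dist x y i : `|x i - y i| <= dist x y.
Proof. exact: (le_bigmax 0 (fun j => `|x j - y j|)). Qed.

Lemma dist_lt x y e : 0 < e -> (forall i, `|x i - y i| < e) -> dist x y < e.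
Proof. by move=> e0 lt_e; apply: bigmax_lt. Qed.

Lemma distC x y : dist x y = dist y x.
Proof. by apply: eq_bigr => i _; rewrite distrC. Qed.

Definition cont_real_on f : Prop :=
  forall x, A x -> forall e : R, 0 < e -> exists2 d : R, 0 < d &
    forall y, A y -> dist x y < d -> `|f x - f y| < e.

Lemma eq_cont_real_on f g : f =1 g -> cont_real_on f -> cont_real_on g.
Proof.
move=> fg cf x Ax e e0; have [d d0 near_x] := cf x Ax e e0.
by exists d => // y Ay xy; rewrite -!fg; apply: near_x.
Qed.

Lemma cont_real_cst c : cont_real_on (fun => c).
Proof. by move=> x _ e e0; exists 1 => // y _ _; rewrite subrr normr0. Qed.

Lemma cont_real_coord i : cont_real_on (fun x => x i).
Proof. by move=> x _ e e0; exists e => // y _; apply: le_lt_trans (le_dist _ _ _). Qed.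

Lemma cont_realN f : cont_real_on f -> cont_real_on (fun x => - f x).
Proof.
move=> cf x Ax e e0; have [d d0 near_x] := cf x Ax e e0.
by exists d => // y Ay xy; rewrite -opprD normrN; apply: near_x.
Qed.

Lemma cont_realD f g :
  cont_real_on f -> cont_real_on g -> cont_real_on (fun x => f x + g x).
Proof.
move=> cf cg x Ax e e0; have e2 : 0 < e / 2 by rewrite divr_gt0.
have [d1 d1_gt0 near_f] := cf x Ax _ e2; have [d2 d2_gt0 near_g] := cg x Ax _ e2.
exists (Num.min d1 d2); first by rewrite lt_min d1_gt0 d2_gt0.
move=> y Ay; rewrite lt_min => /andP[/(near_f y Ay) lt_f /(near_g y Ay) lt_g].
rewrite opprD addrACA; apply: le_lt_trans (ler_normD _ _) _; lra.
Qed.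

Lemma cont_realB f g :
  cont_real_on f -> cont_real_on g -> cont_real_on (fun x => f x - g x).
Proof. by move=> cf cg; apply: cont_realD => //; apply: cont_realN. Qed.

Lemma cont_realM f g :
  cont_real_on f -> cont_real_on g -> cont_real_on (fun x => f x * g x).
Proof.
move=> cf cg x Ax e e0.
pose M := `|f x| + `|g x| + 1.
have M_gt0 : 0 < M by rewrite ltr_wpDl ?addr_ge0.
pose eps := Num.min 1 (e / (2 * M)).
have eps_gt0 : 0 < eps by rewrite lt_min ltr01 divr_gt0 ?mulr_gt0.
have eps1 : eps <= 1 by rewrite ge_min lexx.
have epsM : eps * M <= e / 2.
  have -> : e / 2 = e / (2 * M) * M by field; rewrite gt_eqF.
  by rewrite ler_pM2r // ge_min lexx orbT.
have [d1 d1_gt0 near_f] := cf x Ax _ eps_gt0.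
have [d2 d2_gt0 near_g] := cg x Ax _ eps_gt0.
exists (Num.min d1 d2); first by rewrite lt_min d1_gt0 d2_gt0.
move=> y Ay; rewrite lt_min => /andP[/(near_f y Ay) lt_f /(near_g y Ay) lt_g].
have fy : `|f y| <= `|f x| + 1.
  by have := ler_normD (f x) (f y - f x); rewrite subrKC distrC; lra.
have -> : f x * g x - f y * g y = (f x - f y) * g x + f y * (g x - g y) by ring.
apply: le_lt_trans (ler_normD _ _) _; rewrite !normrM.
have t1 : `|f x - f y| * `|g x| <= eps * `|g x| by rewrite ler_wpM2r // ltW.
have t2 : `|f y| * `|g x - g y| <= (`|f x| + 1) * eps by rewrite ler_pM // ltW.
rewrite /M in epsM; lra.
Qed.

Lemma cont_realX f n : cont_real_on f -> cont_real_on (fun x => f x ^+ n).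
Proof.
move=> cf; elim: n => [|n IHn].
  by apply: eq_cont_real_on (cont_real_cst 1) => x; rewrite expr0.
by apply: eq_cont_real_on (cont_realM cf IHn) => x; rewrite exprS.
Qed.

Lemma cont_real_sum (I : Type) (r : seq I) (P : pred I) (F : I -> (T -> R) -> R) :
  (forall i, cont_real_on (F i)) -> cont_real_on (fun x => \sum_(i <- r | P i) F i x).
Proof.
move=> cF; elim: r => [|i r IHr].
  by apply: eq_cont_real_on (cont_real_cst 0) => x; rewrite big_nil.
have [Pi|nPi] := boolP (P i).
  by apply: eq_cont_real_on (cont_realD (cF i) IHr) => x; rewrite big_cons Pi.
by apply: eq_cont_real_on IHr => x; rewrite big_cons (negbTE nPi).
Qed.

Lemma cont_real_min f g :
  cont_real_on f -> cont_real_on g -> cont_real_on (fun x => Num.min (f x) (g x)).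
Proof.
move=> cf cg x Ax e e0.
have [d1 d1_gt0 near_f] := cf x Ax e e0; have [d2 d2_gt0 near_g] := cg x Ax e e0.
exists (Num.min d1 d2); first by rewrite lt_min d1_gt0 d2_gt0.
move=> y Ay; rewrite lt_min => /andP[/(near_f y Ay) + /(near_g y Ay)].
rewrite !ltr_norml => /andP[? ?] /andP[? ?].
by case: (leP (f x) (g x)) => ?; case: (leP (f y) (g y)) => ?; apply/andP; split; lra.
Qed.

Lemma cont_real_bigmin (I : Type) (r : seq I) (P : pred I) f0 (F : I -> (T -> R) -> R) :
  cont_real_on f0 -> (forall i, cont_real_on (F i)) ->
  cont_real_on (fun x => \big[Num.min/f0 x]_(i <- r | P i) F i x).
Proof.
move=> cf0 cF; elim: r => [|i r IHr].
  by apply: eq_cont_real_on cf0 => x; rewrite big_nil.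
have [Pi|nPi] := boolP (P i).
  by apply: eq_cont_real_on (cont_real_min (cF i) IHr) => x; rewrite big_cons Pi.
by apply: eq_cont_real_on IHr => x; rewrite big_cons (negbTE nPi).
Qed.

Lemma cont_realV f : cont_real_on f -> (forall x, A x -> f x != 0) ->
  cont_real_on (fun x => (f x)^-1).
Proof.
move=> cf f_neq0 x Ax e e0.
pose a : R := `|f x|; have a_gt0 : 0 < a by rewrite normr_gt0 f_neq0.
have eps_gt0 : 0 < Num.min (a / 2) (e * a ^+ 2 / 2).
  by rewrite lt_min !divr_gt0 ?mulr_gt0 ?exprn_gt0.
have [d d_gt0 near_f] := cf x Ax _ eps_gt0; exists d => // y Ay /(near_f y Ay).
rewrite lt_min => /andP[lt_half lt_e].
have fy_ge : a / 2 <= `|f y|.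
  by have := ler_distD (f y) (f x) 0; rewrite !subr0 -/a; lra.
have fy_neq0 : f y != 0 by rewrite -normr_gt0 (lt_le_trans _ fy_ge) ?divr_gt0.
have -> : (f x)^-1 - (f y)^-1 = (f y - f x) / (f x * f y).
  by field; rewrite fy_neq0 f_neq0.
rewrite normrM normfV normrM -/a distrC ltr_pdivrMr ?mulr_gt0 ?normr_gt0 ?f_neq0 //.
apply: lt_le_trans lt_e _.
by rewrite (_ : e * a ^+ 2 / 2 = e * (a * (a / 2))) ?ler_pM2l //; ring.
Qed.

Lemma cont_real_sqrt f : cont_real_on f -> (forall x, A x -> 0 < f x) ->
  cont_real_on (fun x => Num.sqrt (f x)).
Proof.
move=> cf f_gt0 x Ax e e0.
have sx_gt0 : 0 < Num.sqrt (f x) by rewrite sqrtr_gt0 f_gt0.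
have [d d_gt0 near_f] := cf x Ax _ (mulr_gt0 e0 sx_gt0); exists d => // y Ay xy.
have fy_ge0 : 0 <= f y by apply/ltW/f_gt0.
have := near_f y Ay xy; rewrite -{1}(sqr_sqrtr (ltW (f_gt0 x Ax))) -{1}(sqr_sqrtr fy_ge0).
rewrite subr_sqr normrM => lt_e; rewrite -(ltr_pM2r sx_gt0).
apply: le_lt_trans lt_e; rewrite ler_wpM2l // ger0_norm ?lerDl ?sqrtr_ge0 //.
by rewrite addr_ge0 ?sqrtr_ge0.
Qed.

End RealContinuity.

Lemma cont_on_coordwise (R : realType) (T U : finType) (A : (T -> R) -> Prop)
    (f : (T -> R) -> U -> R) :
  (forall u, cont_real_on A (fun x => f x u)) -> cont_on A f.
Proof.
move=> cf x Ax e e0.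
suff [d d_gt0 near_x] : exists2 d : R, 0 < d & forall u, u \in index_enum U ->
    forall y, A y -> dist x y < d -> `|f x u - f y u| < e.
  by exists d => // y Ay xy; apply: dist_lt => // u; apply: near_x; rewrite ?mem_index_enum.
elim: (index_enum U) => [|u r [d d_gt0 near_x]]; first by exists 1.
have [d' d'_gt0 near_xu] := cf u x Ax e e0.
exists (Num.min d d'); first by rewrite lt_min d_gt0 d'_gt0.
move=> w; rewrite inE => /predU1P[-> | w_r] y Ay; rewrite lt_min => /andP[? ?].
  exact: near_xu.
exact: near_x.
Qed.

Lemma homeomorphic_homotopy_equivalent (R : realType) (T U : finType)
    (A : (T -> R) -> Prop) (B : (U -> R) -> Prop) f g :
  maps_into A B f -> maps_into B A g -> cont_on A f -> cont_on B g ->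
  (forall x, A x -> g (f x) = x) -> (forall y, B y -> f (g y) = y) ->
  homotopy_equivalent R A B.
Proof.
have const_homotopy (W : finType) (C : (W -> R) -> Prop) h :
    (forall x, C x -> h x = x) -> homotopy_on C (fun _ x => x) h id.
  move=> hK; split=> // [t x _ _ e e0|x /hK //].
  by exists e => // s y _ _ _; rewrite distC.
move=> fAB gBA cf cg gK fK; exists f, g; split; first by split.
by split; eexists; apply: const_homotopy.
Qed.

Section TriangleMin.
Variable R : realType.
Implicit Type w : 'I_3 -> R.

Definition tri_min w : R := \big[Num.min/w ord_max]_j w j.

Lemma tri_min_le w j : tri_min w <= w j.
Proof. exact: bigmin_le. Qed.

Lemma tri_min_attained w : exists j, tri_min w = w j.
Proof.
apply: (big_ind (fun a => exists j, a = w j)) => [|_ _ [i ->] [j ->]|j _].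
- by exists ord_max.
- by case: (leP (w i) (w j)) => _; [exists i | exists j].
- by exists j.
Qed.

Lemma tri_min_eq w t : (forall j, t <= w j) -> (exists j, w j = t) -> tri_min w = t.
Proof.
move=> le_t [j wj]; apply/le_anti; rewrite -{1}wj tri_min_le /=.
by apply: le_bigmin => *; apply: le_t.
Qed.

End TriangleMin.

Definition tri_boundary_join (T V : finType) (E : V * 'I_3 -> T) : {set {set T}} :=
  [set F : {set T} | (F \subset E @: setT) && [forall v, exists j, E (v, j) \notin F]].

Section TriangleBoundaryJoin.
Variables (R : realType) (T V : finType) (E : V * 'I_3 -> T) (m : nat).
Hypotheses (E_inj : injective E) (card_coords : #|{: V * 'I_2}| = m.+1).

Definition coord_index (p : V * 'I_2) : 'I_m.+1 := cast_ord card_coords (enum_rank p).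
Definition index_coord (i : 'I_m.+1) : V * 'I_2 := enum_val (cast_ord (esym card_coords) i).

Lemma coord_indexK : cancel coord_index index_coord.
Proof. by move=> p; rewrite /index_coord /coord_index cast_ordK enum_rankK. Qed.

Lemma index_coordK : cancel index_coord coord_index.
Proof. by move=> i; rewrite /index_coord /coord_index enum_valK cast_ordKV. Qed.

Definition tri_coords (x : T -> R) (i : 'I_m.+1) : R :=
  let: (v, b) := index_coord i in x (E (v, lift ord_max b)) - x (E (v, ord_max)).

Lemma tri_coords_index x v b :
  tri_coords x (coord_index (v, b)) = x (E (v, lift ord_max b)) - x (E (v, ord_max)).
Proof. by rewrite /tri_coords coord_indexK. Qed.

Definition pad_coords (z : 'I_m.+1 -> R) (v : V) (j : 'I_3) : R :=
  if unlift ord_max j is Some b then z (coord_index (v, b)) else 0.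

(* Subtracting the minimum inverts [x |-> (x_0 - x_2, x_1 - x_2)] on the cone over the
   triangle boundary, whose points are exactly those with a vanishing coordinate. *)
Definition tri_weights (z : 'I_m.+1 -> R) (p : V * 'I_3) : R :=
  pad_coords z p.1 p.2 - tri_min (pad_coords z p.1).

Definition weight_sum (z : 'I_m.+1 -> R) : R := \sum_p tri_weights z p.

Definition to_sphere (x : T -> R) (i : 'I_m.+1) : R :=
  tri_coords x i / Num.sqrt (\sum_k tri_coords x k ^+ 2).

Definition to_complex (z : 'I_m.+1 -> R) (t : T) : R :=
  if [pick p | E p == t] is Some p then tri_weights z p / weight_sum z else 0.

Lemma tri_weights_ge0 z p : 0 <= tri_weights z p.
Proof. by rewrite subr_ge0 tri_min_le. Qed.

Lemma tri_weights_vanish z v : exists j, tri_weights z (v, j) = 0.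
Proof.
have [j min_j] := tri_min_attained (pad_coords z v).
by exists j; rewrite /tri_weights min_j subrr.
Qed.

Lemma tri_weightsB z v b :
  tri_weights z (v, lift ord_max b) - tri_weights z (v, ord_max) = z (coord_index (v, b)).
Proof. by rewrite /tri_weights /pad_coords /= liftK unlift_none opprB addrA subrK subr0. Qed.

Lemma to_complexE z p : to_complex z (E p) = tri_weights z p / weight_sum z.
Proof. by rewrite /to_complex; case: pickP => [q /eqP/E_inj -> // | /(_ p)]; rewrite eqxx. Qed.

Lemma to_complex_out z t : t \notin E @: setT -> to_complex z t = 0.
Proof.
move=> tE; rewrite /to_complex; case: pickP => // p /eqP Ep.
by case/negP: tE; rewrite -Ep imset_f.
Qed.

Lemma sum_over_image (F : T -> R) :
  (forall t, t \notin E @: setT -> F t = 0) -> \sum_t F t = \sum_p F (E p).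
Proof.
move=> F_out; rewrite (bigID (mem (E @: setT))) /= [X in _ + X]big1 ?addr0 //.
rewrite big_imset => [|p q _ _ /E_inj //].
by apply: eq_bigl => p; rewrite inE.
Qed.

Section FromComplex.
Variable x : T -> R.
Hypothesis x_real : realization R (tri_boundary_join E) x.

Lemma realization_ge0 t : 0 <= x t.
Proof. by case: x_real. Qed.

Lemma realization_out t : t \notin E @: setT -> x t = 0.
Proof.
case: x_real => _ [_]; rewrite inE => /andP[/subsetP supp_E _] tE.
by apply/eqP; apply: contraNT tE => xt; apply: supp_E; rewrite inE.
Qed.

Lemma realization_vanish v : exists j, x (E (v, j)) = 0.
Proof.
case: x_real => _ [_]; rewrite inE => /andP[_ /forallP/(_ v)/existsP[j]].
by rewrite inE negbK => /eqP; exists j.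
Qed.

Lemma realization_sum : \sum_p x (E p) = 1.
Proof. by case: x_real => _ [<- _]; rewrite (sum_over_image realization_out). Qed.

Lemma tri_coords_neq0 : exists i, tri_coords x i != 0.
Proof.
apply/existsP; apply: contraT => /existsPn coords0.
have x_const v j : x (E (v, j)) = x (E (v, ord_max)).
  case: (unliftP ord_max j) => [b ->|-> //].
  by apply/eqP; rewrite -subr_eq0 -tri_coords_index; apply/negPn/coords0.
have := realization_sum; rewrite big1 => [/eqP|[v j] _]; first by rewrite eq_sym oner_eq0.
by have [j0 x0] := realization_vanish v; rewrite x_const -(x_const v j0).
Qed.

Lemma sum_tri_coords_sqr_gt0 : 0 < \sum_k tri_coords x k ^+ 2.
Proof.
have [i xi] := tri_coords_neq0; rewrite (bigD1 i) //=.
by rewrite ltr_wpDr ?sumr_ge0 // => [k _|]; rewrite ?sqr_ge0 // exprn_even_gt0.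
Qed.

Let s := Num.sqrt (\sum_k tri_coords x k ^+ 2).

Lemma norm_tri_coords_gt0 : 0 < s.
Proof. by rewrite sqrtr_gt0 sum_tri_coords_sqr_gt0. Qed.

Lemma to_sphere_sphere : sphere R m (to_sphere x).
Proof.
have S_gt0 := sum_tri_coords_sqr_gt0.
rewrite /sphere /to_sphere; under eq_bigr do rewrite expr_div_n.
by rewrite -mulr_suml sqr_sqrtr ?divff ?gt_eqF ?ltW.
Qed.

Lemma tri_weights_to_sphere p : tri_weights (to_sphere x) p = x (E p) / s.
Proof.
have s_gt0 := norm_tri_coords_gt0; case: p => v j.
have pad_eq k : pad_coords (to_sphere x) v k = (x (E (v, k)) - x (E (v, ord_max))) / s.
  rewrite /pad_coords; case: unliftP => [b ->|->]; last by rewrite subrr mul0r.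
  by rewrite /to_sphere tri_coords_index.
have min_eq : tri_min (pad_coords (to_sphere x) v) = - x (E (v, ord_max)) / s.
  apply: tri_min_eq => [k|].
    by rewrite pad_eq ler_pM2r ?invr_gt0 // lerBrDr addrC subrr realization_ge0.
  by have [k xk] := realization_vanish v; exists k; rewrite pad_eq xk sub0r.
by rewrite /tri_weights /= pad_eq min_eq; ring.
Qed.

Lemma to_complex_to_sphere : to_complex (to_sphere x) = x.
Proof.
have s_neq0 : s != 0 by rewrite gt_eqF ?norm_tri_coords_gt0.
have sum_eq : weight_sum (to_sphere x) = s^-1.
  rewrite /weight_sum; under eq_bigr do rewrite tri_weights_to_sphere.
  by rewrite -mulr_suml realization_sum mul1r.
apply: functional_extensionality => t.
have [/imsetP[p _ ->]|tE] := boolP (t \in E @: setT).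
  by rewrite to_complexE tri_weights_to_sphere sum_eq invrK mulfVK.
by rewrite to_complex_out ?realization_out.
Qed.

End FromComplex.

Section FromSphere.
Variable z : 'I_m.+1 -> R.
Hypothesis z_sphere : sphere R m z.

Lemma weight_sum_gt0 : 0 < weight_sum z.
Proof.
have [i zi] : exists i, z i != 0.
  apply/existsP; apply: contraT => /existsPn z0; move: z_sphere; rewrite /sphere big1.
    by move/eqP; rewrite eq_sym oner_eq0.
  by move=> i _; move/negPn/eqP: (z0 i) => ->; rewrite expr0n.
have weights_ge0 p (_ : true) : 0 <= tri_weights z p := tri_weights_ge0 z p.
rewrite lt_def sumr_ge0 // andbT; apply: contraNneq zi => /(psumr_eq0P weights_ge0) weights0.
rewrite -[i]index_coordK; case: (index_coord i) => v b.
by rewrite -tri_weightsB !weights0 ?subr0.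
Qed.

Lemma to_complex_realization : realization R (tri_boundary_join E) (to_complex z).
Proof.
have k_gt0 := weight_sum_gt0; split; [|split].
- move=> t; rewrite /to_complex; case: pickP => // p _.
  by rewrite divr_ge0 ?tri_weights_ge0 ?ltW.
- rewrite (sum_over_image (@to_complex_out z)); under eq_bigr do rewrite to_complexE.
  by rewrite -mulr_suml divff ?gt_eqF.
- rewrite inE; apply/andP; split.
    by apply/subsetP => t; rewrite inE; apply: contraR => /to_complex_out ->.
  apply/forallP => v; have [j wj] := tri_weights_vanish z v.
  by apply/existsP; exists j; rewrite inE to_complexE wj mul0r eqxx.
Qed.

Lemma to_sphere_to_complex : to_sphere (to_complex z) = z.
Proof.
have k_gt0 := weight_sum_gt0.
have coords_eq i : tri_coords (to_complex z) i = z i / weight_sum z.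
  rewrite -[i]index_coordK; case: (index_coord i) => v b.
  by rewrite tri_coords_index !to_complexE -mulrBl tri_weightsB.
have norm_eq : \sum_k tri_coords (to_complex z) k ^+ 2 = (weight_sum z)^-1 ^+ 2.
  under eq_bigr do rewrite coords_eq expr_div_n.
  by rewrite -mulr_suml z_sphere mul1r exprVn.
apply: functional_extensionality => i.
rewrite /to_sphere coords_eq norm_eq sqrtr_sqr ger0_norm ?invr_ge0 ?ltW //.
by rewrite invrK mulfVK ?gt_eqF.
Qed.

End FromSphere.

Lemma cont_to_sphere : cont_on (realization R (tri_boundary_join E)) to_sphere.
Proof.
have cont_coords i : cont_real_on (realization R (tri_boundary_join E)) (tri_coords^~ i).
  rewrite /tri_coords; case: (index_coord i) => v b.
  by apply: cont_realB; apply: cont_real_coord.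
apply: cont_on_coordwise => i; apply: cont_realM => //; apply: cont_realV.
  apply: cont_real_sqrt; first by apply: cont_real_sum => k; apply: cont_realX.
  by move=> x x_real; apply: sum_tri_coords_sqr_gt0.
by move=> x x_real; rewrite gt_eqF ?norm_tri_coords_gt0.
Qed.

Lemma cont_to_complex : cont_on (sphere R m) to_complex.
Proof.
have cont_pad v j : cont_real_on (sphere R m) (fun z => pad_coords z v j).
  rewrite /pad_coords; case: (unlift ord_max j) => [b|].
    exact: cont_real_coord.
  exact: cont_real_cst.
have cont_weights p : cont_real_on (sphere R m) (tri_weights^~ p).
  by apply: cont_realB => //; apply: cont_real_bigmin.
apply: cont_on_coordwise => t; rewrite /to_complex.
case: pickP => [p _|_]; last exact: cont_real_cst.
apply: cont_realM => //; apply: cont_realV; first exact: cont_real_sum.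
by move=> z z_sphere; rewrite gt_eqF ?weight_sum_gt0.
Qed.

Theorem tri_boundary_join_sphere :
  homotopy_equivalent R (realization R (tri_boundary_join E)) (sphere R m).
Proof.
apply: (homeomorphic_homotopy_equivalent (f := to_sphere) (g := to_complex)).
- exact: to_sphere_sphere.
- exact: to_complex_realization.
- exact: cont_to_sphere.
- exact: cont_to_complex.
- exact: to_complex_to_sphere.
- exact: to_sphere_to_complex.
Qed.

End TriangleBoundaryJoin.

Local Close Scope ring_scope.

Lemma card_ord_lt n k : k <= n -> #|[set i : 'I_n | i < k]| = k.
Proof.
move=> le_kn; have widen_inj : injective (widen_ord le_kn).
  by move=> i j eq_ij; apply: val_inj; exact: (congr1 val eq_ij).
rewrite -[RHS]card_ord -(card_imset _ widen_inj).
apply: eq_card => i; rewrite inE; apply/idP/imsetP => [lt_ik|[j _ ->]]; last by rewrite /= ltn_ord.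
by exists (Ordinal lt_ik) => //; apply: val_inj.
Qed.

Lemma card_le_ord n (A : {set 'I_n.+1}) : (#|A| <= n) = [exists j, j \notin A].
Proof.
rewrite -ltnS -[X in _ < X](card_ord n.+1) -(cardsC A) -[X in X < _]addn0 ltn_add2l.
by rewrite card_gt0; apply/set0Pn/existsP => -[j]; rewrite ?inE => jA; exists j; rewrite ?inE.
Qed.

Section ClawedGraph.
Variables (V : finType) (adj : rel V).
Hypotheses (adj_sym : symmetric adj) (adj_irr : irreflexive adj).
Hypothesis deg_le3 : forall v, deg adj v <= 3.

Local Notation cadj := (claw_adj adj).

Lemma claw_adj_sym : symmetric cadj.
Proof. by move=> x y; rewrite /claw_adj orbC. Qed.

Lemma claw_adj_inl v y : cadj (inl v) y = claw_half adj (inl v) y.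
Proof. by rewrite /claw_adj; case: y => [w|[s|[w i]]] //=; rewrite orbF. Qed.

Lemma claw_adj_inr a b : cadj (inr a) (inr b) = false.
Proof. by []. Qed.

Lemma card_edges_at v : #|[set e in edges adj | v \in e]| = deg adj v.
Proof.
have inj : {in [set u | adj v u] &, injective (fun u => [set v; u])}.
  move=> u u'; rewrite !inE => vu _ eq_vu.
  have : u \in [set v; u'] by rewrite -eq_vu !inE eqxx orbT.
  by rewrite !inE => /predU1P[uv|/eqP //]; rewrite uv adj_irr in vu.
rewrite /deg -(card_in_imset inj); apply: eq_card => e; rewrite !inE.
apply/andP/imsetP => [[/existsP[a /existsP[b /andP[ab /eqP ->]]]]|[u]].
  rewrite !inE => /predU1P[->|/eqP ->]; first by exists b; rewrite ?inE.
  by exists a; rewrite ?inE 1?adj_sym // setUC.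
rewrite inE => vu ->; split; last by rewrite !inE eqxx.
by apply/existsP; exists v; apply/existsP; exists u; rewrite vu eqxx.
Qed.

Definition claw_nbhd (v : V) : {set claw_vertex V} := [set y | cadj (inl v) y].

Lemma claw_nbhdE v : claw_nbhd v =
  (fun e => inr (inl e)) @: [set e in edges adj | v \in e] :|:
  (fun i => inr (inr (v, i))) @: [set i : 'I_3 | i < 3 - deg adj v].
Proof.
apply/setP => y; rewrite !inE claw_adj_inl.
case: y => [w|[e|[w i]]] /=.
- by apply/esym/norP; split; apply/imsetP => -[].
- rewrite (mem_imset (f := fun e => inr (inl e))) ?inE; last by move=> ? ? [].
  by rewrite [X in _ || X](_ : _ = false) ?orbF //; apply/negbTE/imsetP => -[].
- rewrite [X in X || _](_ : _ = false) //; last by apply/negbTE/imsetP => -[].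
  apply/andP/imsetP => [[/eqP <- lt_i]|[j]]; first by exists i; rewrite ?inE.
  by rewrite inE => lt_j [-> ->].
Qed.

Lemma card_claw_nbhd v : #|claw_nbhd v| = 3.
Proof.
rewrite claw_nbhdE cardsU.
rewrite (_ : _ :&: _ = set0) ?cards0 ?subn0; last first.
  by apply/setP => y; rewrite !inE; apply/andP => -[/imsetP[? _ ->] /imsetP[]].
rewrite !card_imset => [|? ? [] //|? ? [] //].
by rewrite card_edges_at card_ord_lt ?leq_subr // subnKC.
Qed.

Definition claw_edge (p : V * 'I_3) : {set claw_vertex V} :=
  [set inl p.1; nth (inl p.1) (enum (claw_nbhd p.1)) p.2].

Lemma claw_nbhd_nth v (j : 'I_3) : nth (inl v) (enum (claw_nbhd v)) j \in claw_nbhd v.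
Proof. by rewrite -mem_enum mem_nth // -cardE card_claw_nbhd. Qed.

Lemma claw_nbhd_inl v w : inl w \notin claw_nbhd v.
Proof. by rewrite inE claw_adj_inl. Qed.

Lemma inl_claw_edge v p : (inl v \in claw_edge p) = (v == p.1).
Proof.
rewrite !inE; have /negbTE -> : inl v != nth (inl p.1) (enum (claw_nbhd p.1)) p.2.
  by apply: contraNneq (claw_nbhd_inl p.1 v) => ->; apply: claw_nbhd_nth.
by rewrite orbF.
Qed.

Lemma claw_edge_inj : injective claw_edge.
Proof.
move=> [v j] [w k] eq_vw.
have /eqP/= w_v : v == w by rewrite -(inl_claw_edge v (w, k)) -eq_vw inl_claw_edge.
subst w; congr (_, _); apply/val_inj/eqP.
have : nth (inl v) (enum (claw_nbhd v)) j \in claw_edge (v, k) by rewrite -eq_vw !inE eqxx orbT.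
rewrite !inE (negbTE (contraNneq _ (claw_nbhd_inl v v))); last by move=> <-; apply: claw_nbhd_nth.
by rewrite nth_uniq ?enum_uniq // -cardE card_claw_nbhd.
Qed.

Lemma edges_claw : edges cadj = claw_edge @: setT.
Proof.
have edge_at v y : cadj (inl v) y -> [set inl v; y] \in claw_edge @: setT.
  move=> vy; have y_nb : y \in enum (claw_nbhd v) by rewrite mem_enum inE.
  have lt_idx : index y (enum (claw_nbhd v)) < 3.
    by rewrite -(card_claw_nbhd v) cardE index_mem.
  by apply/imsetP; exists (v, Ordinal lt_idx); rewrite // /claw_edge /= nth_index.
apply/setP => e; rewrite inE; apply/existsP/idP => [[x /existsP[y /andP[xy /eqP ->]]]|].
  case: x xy => [v|a] xy; first exact: edge_at.
  case: y xy => [w|b] xy; last by rewrite claw_adj_inr in xy.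
  by rewrite setUC; apply: edge_at; rewrite claw_adj_sym.
case/imsetP => -[v j] _ ->; exists (inl v); apply/existsP.
exists (nth (inl v) (enum (claw_nbhd v)) j); rewrite eqxx andbT.
by have := claw_nbhd_nth v j; rewrite inE.
Qed.

Lemma claw_edges_at_inl (F : {set {set claw_vertex V}}) v : F \subset claw_edge @: setT ->
  #|[set e in F | inl v \in e]| = #|[set j | claw_edge (v, j) \in F]|.
Proof.
move=> F_sub; have inj_v : injective (fun j => claw_edge (v, j)) by move=> j k /claw_edge_inj[].
rewrite -(card_imset _ inj_v).
apply: eq_card => e; rewrite !inE; apply/andP/imsetP => [[eF]|[j]].
  have /imsetP[[w j] _ e_eq] := subsetP F_sub e eF; subst e.
  by rewrite inl_claw_edge => /eqP/= ->; exists j; rewrite ?inE.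
by rewrite inE => jF ->; rewrite inl_claw_edge eqxx.
Qed.

Lemma card_claw_attached y : #|[set v | cadj (inl v) (inr y)]| <= 2.
Proof.
case: y => [e|[w i]]; last first.
  apply: (@leq_trans #|[set w]|); last by rewrite cards1.
  by apply/subset_leq_card/subsetP => v; rewrite !inE claw_adj_inl /= => /andP[].
have [e_edge|e_not] := boolP (e \in edges adj); last first.
  rewrite (_ : [set v | _] = set0) ?cards0 //.
  by apply/setP => v; rewrite !inE claw_adj_inl /= (negbTE e_not).
apply: (@leq_trans #|e|).
  by apply/subset_leq_card/subsetP => v; rewrite !inE claw_adj_inl /= => /andP[].
move: e_edge; rewrite inE => /existsP[a /existsP[b /andP[_ /eqP ->]]].
by rewrite cards2; case: (a != b).
Qed.

Lemma claw_edges_at_inr (F : {set {set claw_vertex V}}) y : F \subset claw_edge @: setT ->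
  #|[set e in F | inr y \in e]| <= 2.
Proof.
move=> F_sub; pose att := [set v | cadj (inl v) (inr y)].
have sub_att : [set e in F | inr y \in e] \subset (fun v => [set inl v; inr y]) @: att.
  apply/subsetP => e; rewrite inE => /andP[eF ye].
  have /imsetP[[v j] _ e_eq] := subsetP F_sub e eF.
  move: ye; rewrite e_eq !inE /= => /eqP y_eq; apply/imsetP; exists v.
    by have := claw_nbhd_nth v j; rewrite !inE y_eq.
  by rewrite y_eq.
exact: leq_trans (subset_leq_card sub_att) (leq_trans (leq_imset_card _ _) (card_claw_attached y)).
Qed.

Lemma M2_claw : M2 cadj = tri_boundary_join claw_edge.
Proof.
apply/setP => F; rewrite !inE edges_claw; have [F_sub|//] := boolP (F \subset _).
apply/forallP/forallP => [F_le2 v|F_avoid [v|y]]; last exact: claw_edges_at_inr.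
  have := F_le2 (inl v); rewrite claw_edges_at_inl // card_le_ord.
  by case/existsP=> j; rewrite inE => jF; apply/existsP; exists j.
rewrite claw_edges_at_inl // card_le_ord; have /existsP[j jF] := F_avoid v.
by apply/existsP; exists j; rewrite inE.
Qed.

End ClawedGraph.

Lemma card_ord_le_size N (A : {set 'I_N}) (s : seq nat) :
  (forall u, u \in A -> (u : nat) \in s) -> #|A| <= size s.
Proof.
move=> A_s; rewrite cardE -(size_map val).
apply: uniq_leq_size => [|x /mapP[u]]; first by rewrite map_inj_uniq ?enum_uniq //; apply: val_inj.
by rewrite mem_enum => /A_s uA ->.
Qed.

Lemma path_adj_sym k : symmetric (path_adj k).
Proof. by move=> i j; rewrite /path_adj orbC. Qed.

Lemma path_adj_irr k : irreflexive (path_adj k).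
Proof. by move=> i; rewrite /path_adj; apply/negP => /orP[] /eqP; lia. Qed.

Lemma deg_path_adj k v : deg (path_adj k) v <= 3.
Proof.
apply: (@leq_trans 2) => //; apply: (card_ord_le_size (s := [:: v.+1; v.-1])) => u.
by rewrite inE /path_adj !inE => /orP[] /eqP u_eq; apply/orP; [left|right]; apply/eqP; lia.
Qed.

Lemma cycle_adj_sym n : symmetric (cycle_adj n).
Proof. by move=> i j; rewrite /cycle_adj eq_sym orbC. Qed.

Lemma cycle_adj_irr n : irreflexive (cycle_adj n).
Proof. by move=> i; rewrite /cycle_adj eqxx. Qed.

Lemma deg_cycle_adj n v : deg (cycle_adj n) v <= 3.
Proof.
apply: (card_ord_le_size (s := [:: v.+1 %% n; v.-1; n.-1])) => u.
rewrite inE /cycle_adj !inE => /andP[_ /orP[/eqP -> | /eqP u_eq]]; first by rewrite eqxx.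
have := ltn_ord u; case: (ltnP u.+1 n) => [lt_un _ | le_nu lt_un].
  move: u_eq; rewrite modn_small // => u_eq.
  by rewrite [_ == v.-1](_ : _ = true) ?orbT //; apply/eqP; lia.
by rewrite [_ == n.-1](_ : _ = true) ?orbT //; apply/eqP; lia.
Qed.

Theorem M2_claw_sphere (R : realType) (V : finType) (adj : rel V) (m : nat) :
  symmetric adj -> irreflexive adj -> (forall v, deg adj v <= 3) -> #|V| * 2 = m.+1 ->
  homotopy_equivalent R (realization R (M2 (claw_adj adj))) (sphere R m).
Proof.
move=> adj_sym adj_irr deg_le3 card_V; rewrite M2_claw //.
by apply: tri_boundary_join_sphere; rewrite ?card_prod ?card_ord //; apply: claw_edge_inj.
Qed.

Theorem mainTheorem11 (R : realType) (n : nat) (hn : 3 <= n) :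
  homotopy_equivalent R
    (realization R (M2 (claw_adj (path_adj (n - 1)))))
    (sphere R (2 * n - 1))
  /\
  homotopy_equivalent R
    (realization R (M2 (claw_adj (cycle_adj n))))
    (sphere R (2 * n - 1)).
Proof.
split; apply: M2_claw_sphere.
- exact: path_adj_sym.
- exact: path_adj_irr.
- exact: deg_path_adj.
- by rewrite card_ord; lia.
- exact: cycle_adj_sym.
- exact: cycle_adj_irr.
- exact: deg_cycle_adj.
- by rewrite card_ord; lia.
Qed.
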